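(* Let $R$ be a ring (associative with identity) and $n$ a positive integer. The following are equivalent: (1) $R$ is $n$-clean; (2) every factor ring of $R$ is $n$-clean; (3) every indecomposable factor ring of $R$ is $n$-clean; (4) every Pierce stalk of $R$ is $n$-clean.
   Context: A ring is $n$-clean if each of its elements can be written as $e+u_1+\cdots+u_n$ with $e$ an idempotent and $u_1,\dots,u_n$ units. A ring is indecomposable if it is not isomorphic to a direct product of two nonzero rings. Let $S(R)$ be the set of all proper ideals of $R$ generated by central idempotents. A Pierce ideal of $R$ is a maximal (with respect to inclusion) element of $S(R)$, and if $P$ is a Pierce ideal, the factor ring $R/P$ is called a Pierce stalk of $R$. *)

From HB Require Import structures.
From mathcomp Require Import all_boot all_algebra.
Set Implicit Arguments. Unset Strict Implicit. Unset Printing Implicit Defensive.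
Import GRing.Theory.
Local Open Scope ring_scope.

Definition is_unit (S : pzRingType) (u : S) : Prop :=
  exists v : S, u * v = 1 /\ v * u = 1.

Definition idempotent (S : pzRingType) (e : S) : Prop := e * e = e.

Definition n_clean (n : nat) (S : pzRingType) : Prop :=
  forall x : S, exists e : S, idempotent e /\
    exists u : 'I_n -> S, (forall i, is_unit (u i)) /\ x = e + \sum_(i < n) u i.

Definition nonzero_ring (S : pzRingType) : Prop := (1 : S) <> 0.

Definition indecomposable (S : pzRingType) : Prop :=
  ~ exists (S1 S2 : pzRingType) (g : {rmorphism S -> (S1 * S2)%type}),
      nonzero_ring S1 /\ nonzero_ring S2 /\ bijective g.

Definition is_ideal (R : pzRingType) (I : R -> Prop) : Prop :=
  [/\ I 0, (forall x y, I x -> I y -> I (x + y)), (forall x, I x -> I (- x)),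
      (forall r x, I x -> I (r * x)) & (forall r x, I x -> I (x * r))].

Definition proper_ideal (R : pzRingType) (I : R -> Prop) : Prop :=
  is_ideal I /\ ~ I 1.

Definition central (R : pzRingType) (x : R) : Prop := forall y, x * y = y * x.

Definition ideal_gen (R : pzRingType) (E : R -> Prop) : R -> Prop :=
  fun x => forall J : R -> Prop, is_ideal J -> (forall e, E e -> J e) -> J x.

Definition in_SR (R : pzRingType) (I : R -> Prop) : Prop :=
  proper_ideal I /\
  exists E : R -> Prop, (forall e, E e -> central e /\ idempotent e) /\
    (forall x, I x <-> ideal_gen E x).

Definition pierce_ideal (R : pzRingType) (P : R -> Prop) : Prop :=
  in_SR P /\ forall J : R -> Prop, in_SR J -> (forall x, P x -> J x) ->
    forall x, J x -> P x.

(* Factor rings R/I are represented (up to isomorphism) as surjective ring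
   morphisms f : R -> S; the factor ring R/I is S with ker f = I. *)
Definition factor_map (R S : pzRingType) (f : {rmorphism R -> S}) : Prop :=
  forall y : S, exists x : R, f x = y.

Definition kernel_is (R S : pzRingType) (f : {rmorphism R -> S}) (I : R -> Prop)
  : Prop := forall x, f x = 0 <-> I x.

(* If x is not n-clean, Zorn's lemma gives an ideal M, maximal among the
   admissible ideals (all ideals, or those generated by central idempotents)
   modulo which x is not n-clean; chains are harmless because being n-clean
   modulo an ideal is witnessed by finitely many of its elements.  A central
   idempotent d of R/M other than 0 and 1 would make x n-clean modulo the
   strictly larger ideals {y | y d = 0} and {y | y (1 - d) = 0}, and the two
   decompositions glue along the Peirce decomposition s = s d + s (1 - d)
   into one modulo M.  Hence R/M is indecomposable, and in the second case M
   is a Pierce ideal; either way R/M is not n-clean. *)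

From HB Require Import structures.
From mathcomp Require Import all_boot all_algebra.
From mathcomp Require Import boolp classical_sets generic_quotient ring_quotient.
Set Implicit Arguments. Unset Strict Implicit. Unset Printing Implicit Defensive.
Import GRing.Theory.
Local Open Scope ring_scope.
Local Open Scope classical_set_scope.

Section Ideals.
Variable R : pzRingType.
Implicit Types (K : set R) (E : set R).

Lemma ideal_full K : is_ideal K -> K 1 -> forall y, K y.
Proof. by case=> _ _ _ _ KMr K1 y; rewrite -[y]mul1r; apply: KMr. Qed.

Lemma is_ideal0 : is_ideal (fun y : R => y = 0).
Proof.
split=> // [x y -> ->|x ->|r x ->|r x ->];
  by rewrite ?addr0 ?oppr0 ?mulr0 ?mul0r.
Qed.

Lemma is_ideal_preim (S : pzRingType) (q : {rmorphism R -> S}) (J : set S) :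
  is_ideal J -> is_ideal (q @^-1` J).
Proof.
case=> J0 JD JN JMl JMr; split=> /= [|x y|x|r x|r x].
- by rewrite rmorph0.
- by rewrite rmorphD; apply: JD.
- by rewrite rmorphN; apply: JN.
- by rewrite rmorphM; apply: JMl.
- by rewrite rmorphM; apply: JMr.
Qed.

Lemma ideal_gen_ideal E : is_ideal (ideal_gen E).
Proof.
split=> [J [] //|x y Ex Ey J idJ EJ|x Ex J idJ EJ|r x Ex J idJ EJ|r x Ex J idJ EJ];
  case: (idJ) => _ JD JN JMl JMr; [apply: JD|apply: JN|apply: JMl|apply: JMr];
  by [apply: Ex|apply: Ey].
Qed.

Lemma ideal_gen_sub E e : E e -> ideal_gen E e.
Proof. by move=> Ee J _; apply. Qed.

Lemma ideal_gen_min E K : is_ideal K -> E `<=` K -> forall y, ideal_gen E y -> K y.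
Proof. by move=> idK EK y; apply. Qed.

Lemma ideal_gen_mono E E' : E `<=` E' -> forall y, ideal_gen E y -> ideal_gen E' y.
Proof.
move=> EE'; apply: ideal_gen_min; first exact: ideal_gen_ideal.
by move=> e /EE' /ideal_gen_sub.
Qed.

Lemma bigcup_chain_ideal (F : set (set R)) :
  F `<=` @is_ideal R -> F !=set0 -> total_on F subset -> is_ideal (\bigcup_(K in F) K).
Proof.
move=> Fid [K0 FK0] Ftot.
split=> [|x y [K FK Kx] [K' FK' K'y]|x [K FK Kx]|r x [K FK Kx]|r x [K FK Kx]].
- by exists K0 => //; case: (Fid K0 FK0).
- have [KK'|K'K] := Ftot K K' FK FK'.
  + by exists K' => //; case: (Fid K' FK') => _ K'D _ _ _; apply/K'D/K'y/KK'.
  + by exists K => //; case: (Fid K FK) => _ KD _ _ _; apply/KD/K'K.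
- by exists K => //; case: (Fid K FK) => _ _ KN _ _; apply: KN.
- by exists K => //; case: (Fid K FK) => _ _ _ KMl _; apply: KMl.
- by exists K => //; case: (Fid K FK) => _ _ _ _ KMr; apply: KMr.
Qed.

End Ideals.

Definition lann (S : pzRingType) (d : S) : set S := fun t => t * d = 0.

Lemma is_ideal_lann (S : pzRingType) (d : S) : central d -> is_ideal (lann d).
Proof.
rewrite /lann => dC; split=> [|x y xd yd|x xd|r x xd|r x xd].
- by rewrite mul0r.
- by rewrite mulrDl xd yd addr0.
- by rewrite mulNr xd oppr0.
- by rewrite -mulrA xd mulr0.
- by rewrite -mulrA -dC mulrA xd mul0r.
Qed.

Lemma lann_compl_eq0 (S : pzRingType) (d y : S) : lann d y -> lann (1 - d) y -> y = 0.
Proof.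
by rewrite /lann => yd yd'; rewrite -[y]mulr1 -(subrK d 1) mulrDr yd yd' addr0.
Qed.

Section CentralIdempotent.
Variables (S : pzRingType) (d : S).
Hypotheses (d_central : central d) (d_idem : idempotent d).

Lemma central_compl : central (1 - d).
Proof. by move=> y; rewrite mulrBl mulrBr mul1r mulr1 d_central. Qed.

Lemma idempotent_compl : idempotent (1 - d).
Proof. by rewrite /idempotent mulrBl mul1r mulrBr mulr1 d_idem subrr subr0. Qed.

Lemma mul_central_idem y z : y * z * d = (y * d) * (z * d).
Proof.
by rewrite -[RHS]mulrA [d * _]mulrA d_central -[z * d * d]mulrA d_idem mulrA.
Qed.

End CentralIdempotent.

Lemma central_surj_morph (R S : pzRingType) (q : {rmorphism R -> S}) (c : R) :
  factor_map q -> central c -> central (q c).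
Proof. by move=> q_surj cC s; have [y <-] := q_surj s; rewrite -!rmorphM cC. Qed.

Lemma chain_bigcup_seq (T : eqType) (F : set (set T)) (s : seq T) :
  F !=set0 -> total_on F subset ->
  (forall y, y \in s -> (\bigcup_(K in F) K) y) ->
  exists2 K, F K & forall y, y \in s -> K y.
Proof.
move=> [K0 FK0] Ftot; elim: s => [|a s IHs] sF; first by exists K0.
have [Ka FKa Ka_a] := sF a (mem_head a s).
have [Ks FKs Ks_s] : exists2 K, F K & forall y, y \in s -> K y.
  by apply: IHs => y ys; apply: sF; rewrite in_cons ys orbT.
have [KaKs|KsKa] := Ftot Ka Ks FKa FKs.
- by exists Ks => // y; rewrite in_cons => /orP[/eqP->|/Ks_s//]; apply: KaKs.
- by exists Ka => // y; rewrite in_cons => /orP[/eqP->//|/Ks_s]; apply: KsKa.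
Qed.

Lemma Zorn_nonempty_chain (T : Type) (P : set (set T)) (A0 : set T) :
  P A0 ->
  (forall F, F `<=` P -> F !=set0 -> total_on F subset -> P (\bigcup_(X in F) X)) ->
  exists2 A, P A & forall B, P B -> A `<=` B -> B `<=` A.
Proof.
move=> PA0 Pchain.
pose le (A B : {A | P A}) := `[< sval A `<=` sval B >].
have [| | |[A PA] Amax] := ZL_preorder (exist _ A0 PA0) (R := le).
- by move=> ?; apply/asboolP.
- by move=> ? ? ? /asboolP AB /asboolP BC; apply/asboolP; apply: subset_trans BC.
- move=> F Ftot; have [[B FB]|F0] := pselect (F !=set0); last first.
    by exists (exist _ A0 PA0) => B FB; case: F0; exists B.
  have PU : P (\bigcup_(X in sval @` F) X).
    apply: Pchain; first by move=> _ [[X PX] _ <-].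
      by exists (sval B); exists B.
    move=> _ _ [X FX <-] [Y FY <-].
    by have [/asboolP|/asboolP] := Ftot X Y FX FY; [left|right].
  exists (exist _ _ PU) => X FX; apply/asboolP => y Xy.
  by exists (sval X) => //; exists X.
- by exists A => // B PB AB; apply/asboolP/(Amax (exist _ B PB))/asboolP.
Qed.

(* [ring_quotient] only puts a product on quotients of commutative rings, so we
   add one to its Z-module quotient by a two-sided ideal. *)
Section QuotientRing.
Local Open Scope quotient_scope.
Variables (R : pzRingType) (M : set R).
Hypothesis idealM : is_ideal M.

(* The proof argument ties the instance below to [idealM]. *)
Definition ideal_pred of is_ideal M : {pred R} := fun x => `[< M x >].
Local Notation I := (ideal_pred idealM).

Lemma ideal_pred_zmod_closed : zmod_closed I.
Proof.
have [M0 MD MN _ _] := idealM.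
by split=> [|x y /asboolP Mx /asboolP My]; apply/asboolP => //; apply/MD/MN.
Qed.
HB.instance Definition _ := GRing.isZmodClosed.Build R I ideal_pred_zmod_closed.

Definition quot_ring := {ideal_quot I}.
Local Notation Q := quot_ring.
HB.instance Definition _ := ZmodQuotient.on Q.

Lemma quot_eqE x y : \pi_Q x = \pi_Q y <-> M (x - y).
Proof.
split=> [/eqP|?]; first by rewrite eqquotE => /asboolP.
by apply/eqP; rewrite eqquotE; apply/asboolP.
Qed.

Definition quot_one : Q := lift_cst Q 1.
Definition quot_mul := lift_op2 Q *%R.
Canonical pi_quot_one_morph := PiConst quot_one.

Lemma pi_quot_mul : {morph \pi_Q : x y / x * y >-> quot_mul x y}.
Proof.
move=> x y; unlock quot_mul; apply/quot_eqE; have [_ MD _ MMl MMr] := idealM.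
have Mrepr z : M (z - repr (\pi_Q z)) by apply/quot_eqE; rewrite reprK.
set a := repr _; set b := repr _.
rewrite -[x * y](subrK (a * y)) -mulrBl -addrA -mulrBr.
by apply: MD; [apply/MMr/Mrepr | apply/MMl/Mrepr].
Qed.
Canonical pi_quot_mul_morph := PiMorph2 pi_quot_mul.

Lemma quot_mulA : associative quot_mul.
Proof. by move=> x y z; rewrite -[x]reprK -[y]reprK -[z]reprK !piE mulrA. Qed.
Lemma quot_mul1 : left_id quot_one quot_mul.
Proof. by move=> x; rewrite -[x]reprK !piE mul1r. Qed.
Lemma quot_mulr1 : right_id quot_one quot_mul.
Proof. by move=> x; rewrite -[x]reprK !piE mulr1. Qed.
Lemma quot_mulDl : left_distributive quot_mul +%R.
Proof. by move=> x y z; rewrite -[x]reprK -[y]reprK -[z]reprK !piE mulrDl. Qed.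
Lemma quot_mulDr : right_distributive quot_mul +%R.
Proof. by move=> x y z; rewrite -[x]reprK -[y]reprK -[z]reprK !piE mulrDr. Qed.

HB.instance Definition _ :=
  GRing.Zmodule_isPzRing.Build Q quot_mulA quot_mul1 quot_mulr1 quot_mulDl quot_mulDr.

Definition quot_proj (x : R) : Q := \pi_Q x.

Lemma quot_proj_zmod_morphism : zmod_morphism quot_proj.
Proof. by move=> x y; rewrite /quot_proj !piE. Qed.
Lemma quot_proj_monoid_morphism : monoid_morphism quot_proj.
Proof. by split=> [|x y]; rewrite /quot_proj !piE. Qed.
HB.instance Definition _ :=
  GRing.isZmodMorphism.Build R Q quot_proj quot_proj_zmod_morphism.
HB.instance Definition _ :=
  GRing.isMonoidMorphism.Build R Q quot_proj quot_proj_monoid_morphism.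

Lemma quot_proj_surj : factor_map quot_proj.
Proof. by move=> y; exists (repr y); apply: reprK. Qed.

Lemma quot_proj_kernel : kernel_is quot_proj M.
Proof. by move=> x; rewrite -(rmorph0 quot_proj) quot_eqE subr0. Qed.

End QuotientRing.

Arguments quot_proj_surj {R M} idealM.
Arguments quot_proj_kernel {R M} idealM.

Section CleanModulo.
Variable n : nat.

Definition clean_witness (R : pzRingType) (K : set R) (x e : R) (u v : 'I_n -> R) :=
  [/\ K (e * e - e), forall i, K (u i * v i - 1) /\ K (v i * u i - 1)
    & K (x - (e + \sum_(i < n) u i))].

Definition clean_mod (R : pzRingType) (K : set R) (x : R) :=
  exists e (u v : 'I_n -> R), clean_witness K x e u v.

Lemma n_clean_mod0 (S : pzRingType) :
  n_clean n S <-> forall s : S, clean_mod (fun t => t = 0) s.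
Proof.
split=> [Sclean s | Sclean s].
- have [e [e_idem [u [u_unit ->]]]] := Sclean s.
  have [v uv] := choice u_unit.
  exists e, u, v; split=> [|i|]; last exact: subrr.
    by rewrite e_idem subrr.
  by have [-> ->] := uv i; rewrite subrr.
- have [e [u [v [/subr0_eq e_idem uv /subr0_eq ->]]]] := Sclean s.
  exists e; split=> //; exists u; split=> // i; exists (v i).
  by have [/subr0_eq ? /subr0_eq ?] := uv i.
Qed.

Lemma clean_mod_full (R : pzRingType) (K : set R) x : (forall y, K y) -> clean_mod K x.
Proof. by move=> Kfull; exists 0, (fun=> 0), (fun=> 0). Qed.

Lemma clean_mod_mono (R : pzRingType) (K K' : set R) x :
  K `<=` K' -> clean_mod K x -> clean_mod K' x.
Proof.
move=> KK' [e [u [v [Ke Kuv Kx]]]]; exists e, u, v; split; try exact: KK'.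
by move=> i; have [? ?] := Kuv i; split; apply: KK'.
Qed.

Lemma clean_witness_morph (R S : pzRingType) (q : {rmorphism R -> S})
    (K : set R) (L : set S) x e (u v : 'I_n -> R) :
  (forall y, K y <-> L (q y)) ->
  clean_witness K x e u v <->
  clean_witness L (q x) (q e) (fun i => q (u i)) (fun i => q (v i)).
Proof.
move=> KL.
have eE : q (e * e - e) = q e * q e - q e by rewrite rmorphB rmorphM.
have xE : q (x - (e + \sum_(i < n) u i)) = q x - (q e + \sum_(i < n) q (u i)).
  by rewrite rmorphB rmorphD rmorph_sum.
have uvE i : q (u i * v i - 1) = q (u i) * q (v i) - 1 /\
             q (v i * u i - 1) = q (v i) * q (u i) - 1.
  by rewrite !rmorphB !rmorphM rmorph1.
split=> -[Ke Kuv Kx]; split=> [|i|].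
- by rewrite -eE; apply/KL.
- by have [? ?] := Kuv i; have [<- <-] := uvE i; split; apply/KL.
- by rewrite -xE; apply/KL.
- by apply/KL; rewrite eE.
- by have [? ?] := Kuv i; have [E1 E2] := uvE i; split; apply/KL; rewrite ?E1 ?E2.
- by apply/KL; rewrite xE.
Qed.

Lemma clean_mod_morph (R S : pzRingType) (q : {rmorphism R -> S})
    (K : set R) (L : set S) x :
  factor_map q -> (forall y, K y <-> L (q y)) -> clean_mod K x <-> clean_mod L (q x).
Proof.
move=> q_surj KL; have wKL := clean_witness_morph _ _ _ _ KL.
split=> [[e [u [v w]]]|[e [u [v w]]]].
  by exists (q e), (fun i => q (u i)), (fun i => q (v i)); apply/wKL.
have [g gK] := choice q_surj.
exists (g e), (fun i => g (u i)), (fun i => g (v i)); apply/wKL.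
have gKf (a : 'I_n -> S) : (fun i => q (g (a i))) = a by apply/funext => i; apply: gK.
by rewrite gK !gKf.
Qed.

Lemma clean_mod_kernel (R S : pzRingType) (q : {rmorphism R -> S}) (K : set R) x :
  factor_map q -> kernel_is q K -> clean_mod K x <-> clean_mod (fun t => t = 0) (q x).
Proof. by move=> q_surj qK; apply: clean_mod_morph => // y; rewrite qK. Qed.

Lemma n_clean_factor_clean_mod (R S : pzRingType) (q : {rmorphism R -> S})
    (K : set R) x :
  factor_map q -> kernel_is q K -> n_clean n S -> clean_mod K x.
Proof.
by move=> q_surj q_ker /n_clean_mod0 Sclean; apply/(clean_mod_kernel _ q_surj q_ker).
Qed.

Lemma n_clean_surj (R S : pzRingType) (q : {rmorphism R -> S}) :
  factor_map q -> n_clean n R -> n_clean n S.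
Proof.
move=> q_surj /n_clean_mod0 Rclean; apply/n_clean_mod0 => s.
have [x <-] := q_surj s; apply/(clean_mod_morph (K := q @^-1` (fun t => t = 0))) => //.
by apply: clean_mod_mono (Rclean x) => y /= ->; rewrite rmorph0.
Qed.

Lemma clean_mod_bigcup (R : pzRingType) (F : set (set R)) x :
  F !=set0 -> total_on F subset ->
  clean_mod (\bigcup_(K in F) K) x -> exists2 K, F K & clean_mod K x.
Proof.
move=> Fne Ftot [e [u [v [Ue Uuv Ux]]]].
pose s := [:: e * e - e, x - (e + \sum_(i < n) u i)
            & [seq u i * v i - 1 | i <- enum 'I_n] ++
              [seq v i * u i - 1 | i <- enum 'I_n]].
have [|K FK Ks] := chain_bigcup_seq Fne Ftot (s := s).
  move=> y; rewrite !inE mem_cat.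
  case/or4P=> [/eqP->|/eqP->|/mapP[i _ ->]|/mapP[i _ ->]] //.
  - by have [] := Uuv i.
  - by have [] := Uuv i.
exists K => //; exists e, u, v; split; try by apply: Ks; rewrite !inE eqxx ?orbT.
move=> i; have ui : i \in enum 'I_n by rewrite mem_enum.
by split; apply: Ks; rewrite !inE mem_cat; apply/or4P;
  [apply: Or43 | apply: Or44]; apply/mapP; exists i.
Qed.

Lemma clean_witness_meet (R : pzRingType) (K1 K2 K : set R) x e (u v : 'I_n -> R) :
  (forall y, K1 y -> K2 y -> K y) ->
  clean_witness K1 x e u v -> clean_witness K2 x e u v -> clean_witness K x e u v.
Proof.
move=> K12 [K1e K1uv K1x] [K2e K2uv K2x]; split; try exact: K12.
by move=> i; have [? ?] := K1uv i; have [? ?] := K2uv i; split; apply: K12.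
Qed.

Lemma clean_witness_lann (S : pzRingType) (d : S) s e e' (u u' v v' : 'I_n -> S) :
  central d -> idempotent d ->
  e' * d = e * d -> (forall i, u' i * d = u i * d) -> (forall i, v' i * d = v i * d) ->
  clean_witness (lann d) s e u v -> clean_witness (lann d) s e' u' v'.
Proof.
move=> d_central d_idem ee' uu' vv' [Ke Kuv Kx].
have multE := mul_central_idem d_central d_idem.
rewrite /clean_witness /lann; split=> [|i|].
- by rewrite mulrBl multE ee' -multE -mulrBl.
- by have [? ?] := Kuv i; rewrite !mulrBl !multE uu' vv' -!multE -!mulrBl.
- rewrite mulrBl mulrDl mulr_suml ee'; under eq_bigr do rewrite uu'.
  by rewrite -mulr_suml -mulrDl -mulrBl.
Qed.

Lemma clean_mod_peirce (S : pzRingType) (d : S) :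
  central d -> idempotent d -> forall s,
  clean_mod (lann d) s -> clean_mod (lann (1 - d)) s -> clean_mod (fun t => t = 0) s.
Proof.
move=> d_central d_idem s [e1 [u1 [v1 w1]]] [e2 [u2 [v2 w2]]].
pose mix a b := a * d + b * (1 - d).
have mixd a b : mix a b * d = a * d.
  by rewrite /mix mulrDl -!mulrA d_idem (mulrBl d) mul1r d_idem subrr mulr0 addr0.
have mixd' a b : mix a b * (1 - d) = b * (1 - d).
  rewrite /mix mulrDl -!mulrA (idempotent_compl d_idem).
  by rewrite mulrBr mulr1 d_idem subrr mulr0 add0r.
exists (mix e1 e2), (fun i => mix (u1 i) (u2 i)), (fun i => mix (v1 i) (v2 i)).
apply: (clean_witness_meet (@lann_compl_eq0 _ d)).
- by apply: clean_witness_lann d_central d_idem _ _ _ w1 => *; rewrite mixd.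
- have d'_central := central_compl d_central; have d'_idem := idempotent_compl d_idem.
  by apply: clean_witness_lann d'_central d'_idem _ _ _ w2 => *; rewrite mixd'.
Qed.

Definition nonclean_ideal (R : pzRingType) (Q : set (set R)) (x : R) : set (set R) :=
  fun K => [/\ is_ideal K, Q K & ~ clean_mod K x].

Lemma exists_maximal_nonclean_ideal (R : pzRingType) (Q : set (set R)) (x : R) :
  (forall F, F `<=` nonclean_ideal Q x -> F !=set0 -> total_on F subset ->
     Q (\bigcup_(K in F) K)) ->
  Q (fun y => y = 0) -> ~ clean_mod (fun y => y = 0) x ->
  exists2 M, nonclean_ideal Q x M &
    forall K, nonclean_ideal Q x K -> M `<=` K -> K `<=` M.
Proof.
move=> Qchain Q0 x_nonclean.
apply: Zorn_nonempty_chain; first by split; [apply: is_ideal0|..].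
move=> F Fnc Fne Ftot; split.
- by apply: bigcup_chain_ideal => // K /Fnc[].
- exact: Qchain.
- by case/(clean_mod_bigcup Fne Ftot) => K /Fnc[].
Qed.

Section MaximalNoncleanIdeal.
Variables (R S : pzRingType) (Q : set (set R)) (x : R) (M : set R).
Hypotheses (M_nonclean : nonclean_ideal Q x M)
  (M_max : forall K, nonclean_ideal Q x K -> M `<=` K -> K `<=` M).
Variable q : {rmorphism R -> S}.
Hypotheses (q_surj : factor_map q) (q_ker : kernel_is q M).

Lemma maximal_nonclean_lann (d : S) :
  central d -> idempotent d -> d <> 1 -> Q (q @^-1` lann d) -> clean_mod (lann d) (q x).
Proof.
move=> dC dI d1 Qd; set K := q @^-1` lann d.
have K_ideal : is_ideal K := is_ideal_preim q (is_ideal_lann dC).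
have MK : M `<=` K by move=> y /q_ker; rewrite /K /lann /= => ->; rewrite mul0r.
(* [K] strictly contains [M]: a lift of [1 - d] lies in [K] but not in [M]. *)
have [c qc] := q_surj (1 - d).
have Kc : K c by rewrite /K /lann /= qc mulrBl mul1r dI subrr.
have Mc : ~ M c by move=> /q_ker; rewrite qc => /subr0_eq /esym.
apply/(clean_mod_morph (K := K)) => //; apply: contrapT => Knc.
exact/Mc/(M_max (And3 K_ideal Qd Knc) MK).
Qed.

Lemma maximal_nonclean_no_split (d : S) :
  central d -> idempotent d -> d <> 0 -> d <> 1 ->
  Q (q @^-1` lann d) -> Q (q @^-1` lann (1 - d)) -> False.
Proof.
move=> dC dI d0 d1 Qd Qd'; have [_ _ Mx] := M_nonclean.
apply/Mx/(clean_mod_kernel _ q_surj q_ker).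
apply: (clean_mod_peirce dC dI); first exact: maximal_nonclean_lann.
apply: (maximal_nonclean_lann (central_compl dC) (idempotent_compl dI) _ Qd').
by move=> /(congr1 (fun t => 1 - t)); rewrite subKr subrr.
Qed.

End MaximalNoncleanIdeal.

Lemma indecomposable_trivial_central_idempotents (S : pzRingType) :
  (forall d : S, central d -> idempotent d -> d <> 0 -> d <> 1 -> False) ->
  indecomposable S.
Proof.
move=> no_split [S1 [S2 [g [S1_nz [S2_nz [h gK hK]]]]]].
have gd : g (h (1, 0)) = (1, 0) by rewrite hK.
apply: (no_split (h (1, 0))).
- move=> y; apply: (can_inj gK); rewrite !rmorphM gd; case: (g y) => a b.
  by congr pair; rewrite /= ?mul1r ?mulr1 ?mul0r ?mulr0.
- apply: (can_inj gK); rewrite rmorphM gd.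
  by congr pair; rewrite /= ?mul1r ?mul0r.
- by move=> d0; apply: S1_nz; move: gd; rewrite d0 rmorph0 => -[].
- by move=> d1; apply: S2_nz; move: gd; rewrite d1 rmorph1 => -[].
Qed.

Lemma indecomposable_factors_clean (R : pzRingType) :
  (forall (S : pzRingType) (f : {rmorphism R -> S}),
     factor_map f -> indecomposable S -> n_clean n S) -> n_clean n R.
Proof.
move=> H; apply/n_clean_mod0 => x; apply: contrapT => x_nonclean.
have [M M_nonclean M_max] :=
  exists_maximal_nonclean_ideal (Q := setT) (fun _ _ _ _ => I) I x_nonclean.
have [M_ideal _ Mx] := M_nonclean.
have q_surj := quot_proj_surj M_ideal; have q_ker := quot_proj_kernel M_ideal.
apply/Mx/(n_clean_factor_clean_mod _ q_surj q_ker).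
apply: (H _ _ q_surj).
apply: indecomposable_trivial_central_idempotents => d dC dI d0 d1.
exact: (maximal_nonclean_no_split M_nonclean M_max q_surj q_ker dC dI d0 d1).
Qed.

(* [in_SR K] is [proper_ideal K /\ ci_generated K]. *)
Definition ci_generated (R : pzRingType) (K : set R) : Prop :=
  exists E : set R, (forall e, E e -> central e /\ idempotent e) /\
    (forall y, K y <-> ideal_gen E y).

Lemma ci_generated0 (R : pzRingType) : ci_generated (fun y : R => y = 0).
Proof.
exists set0; split=> // y; split=> [->|]; first by case: (ideal_gen_ideal (@set0 R)).
exact: ideal_gen_min (is_ideal0 R) (@sub0set _ _) y.
Qed.

Lemma ci_generated_bigcup (R : pzRingType) (F : set (set R)) :
  F `<=` (fun K => is_ideal K /\ ci_generated K) -> F !=set0 -> total_on F subset ->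
  ci_generated (\bigcup_(K in F) K).
Proof.
move=> Fci Fne Ftot; pose U := \bigcup_(K in F) K.
have U_ideal : is_ideal U by apply: bigcup_chain_ideal => // K /Fci[].
exists (fun e => [/\ U e, central e & idempotent e]); split=> [e [] //|y]; split.
- move=> [K FK Ky]; have [_ [EK [EK_ci KE]]] := Fci K FK.
  apply: (ideal_gen_mono _ ((KE y).1 Ky)) => e EKe; have [eC eI] := EK_ci e EKe.
  by split=> //; exists K => //; apply/(KE e); exact: ideal_gen_sub.
- by apply: ideal_gen_min U_ideal _ y => e [].
Qed.

Lemma ci_generated_preim_lann (R S : pzRingType) (q : {rmorphism R -> S})
    (M : set R) (g : R) :
  factor_map q -> kernel_is q M -> ci_generated M -> central g -> idempotent g ->
  ci_generated (q @^-1` lann (q g)).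
Proof.
move=> q_surj q_ker [E [E_ci ME]] gC gI.
exists (E `|` [set 1 - g]); split.
  by move=> e [/E_ci //|->]; split; [apply: central_compl | apply: idempotent_compl].
have [_ genD _ genMl _] := ideal_gen_ideal (E `|` [set 1 - g]).
move=> y; split=> [yg|].
- have -> : y = y * g + y * (1 - g) by rewrite mulrBr mulr1 addrC subrK.
  apply: genD; last by apply: genMl; apply: ideal_gen_sub; right.
  by apply: (ideal_gen_mono (@subsetUl _ E _)); apply/ME/q_ker; rewrite rmorphM.
- have qgC := central_surj_morph q_surj gC.
  apply: ideal_gen_min (is_ideal_preim q (is_ideal_lann qgC)) _ y.
  move=> e [/ideal_gen_sub/ME/q_ker qe0|->]; rewrite /lann /=.
  + by rewrite qe0 mul0r.
  + by rewrite -rmorphM mulrBl mul1r gI subrr rmorph0.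
Qed.

Lemma maximal_nonclean_pierce (R : pzRingType) (x : R) (M : set R) :
  nonclean_ideal (@ci_generated R) x M ->
  (forall K, nonclean_ideal (@ci_generated R) x K -> M `<=` K -> K `<=` M) ->
  pierce_ideal M.
Proof.
move=> M_nonclean M_max; have [M_ideal M_ci Mx] := M_nonclean.
split; first by split=> //; split=> // /(ideal_full M_ideal)/clean_mod_full.
move=> J [[J_ideal J1] [EJ [EJ_ci JE]]] MJ y /JE EJy; apply: contrapT => My.
have [g EJg Mg] : exists2 g, EJ g & ~ M g.
  apply: contrapT => EJM; apply: My; apply: ideal_gen_min M_ideal _ _ EJy => e EJe.
  by apply: contrapT => Me; apply: EJM; exists e.
have [gC gI] := EJ_ci g EJg.
have M1g : ~ M (1 - g).
  move=> /MJ J1g; apply: J1; rewrite -(subrK g 1).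
  by case: J_ideal => _ JD _ _ _; apply: JD J1g _; apply/JE; exact: ideal_gen_sub.
pose q := quot_proj M_ideal.
have q_surj : factor_map q := quot_proj_surj M_ideal.
have q_ker : kernel_is q M := quot_proj_kernel M_ideal.
apply: (maximal_nonclean_no_split M_nonclean M_max q_surj q_ker (d := q g)).
- exact: central_surj_morph.
- by rewrite /idempotent -rmorphM gI.
- by move=> /q_ker.
- move=> qg1; apply/M1g/q_ker; rewrite rmorphB rmorph1.
  by apply/eqP; rewrite subr_eq0 eq_sym; apply/eqP.
- exact: ci_generated_preim_lann.
- rewrite -(rmorph1 q) -rmorphB.
  exact: ci_generated_preim_lann (central_compl gC) (idempotent_compl gI).
Qed.

Lemma pierce_stalks_clean (R : pzRingType) :
  (forall P : set R, pierce_ideal P -> forall (S : pzRingType) (f : {rmorphism R -> S}),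
     factor_map f -> kernel_is f P -> n_clean n S) -> n_clean n R.
Proof.
move=> H; apply/n_clean_mod0 => x; apply: contrapT => x_nonclean.
have [|M M_nonclean M_max] :=
  exists_maximal_nonclean_ideal _ (@ci_generated0 R) x_nonclean.
  by move=> F Fnc; apply: ci_generated_bigcup => K /Fnc[].
have [M_ideal _ Mx] := M_nonclean.
have q_surj := quot_proj_surj M_ideal; have q_ker := quot_proj_kernel M_ideal.
apply/Mx/(n_clean_factor_clean_mod _ q_surj q_ker).
exact: H (maximal_nonclean_pierce M_nonclean M_max) _ _ q_surj q_ker.
Qed.

End CleanModulo.

Theorem proposition2 (R : pzRingType) (n : nat) (hn : (0 < n)%N) :
  [<-> n_clean n R;
       (forall (S : pzRingType) (f : {rmorphism R -> S}),
          factor_map f -> n_clean n S);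
       (forall (S : pzRingType) (f : {rmorphism R -> S}),
          factor_map f -> indecomposable S -> n_clean n S);
       (forall (P : R -> Prop), pierce_ideal P ->
          forall (S : pzRingType) (f : {rmorphism R -> S}),
            factor_map f -> kernel_is f P -> n_clean n S)].
Proof.
tfae.
- by move=> Rclean S f f_surj; apply: n_clean_surj f_surj Rclean.
- by move=> factors_clean S f f_surj _; apply: factors_clean.
- move=> indec_clean P _ S f f_surj _.
  exact: n_clean_surj f_surj (indecomposable_factors_clean indec_clean).
- exact: pierce_stalks_clean.
Qed.
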